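(* If $\mathcal A\subseteq\binom{[n]}{k}$ is $t$-intersecting, then for every $1\le i<j\le n$, ${\rm co}_2(\Delta_{ij}(\mathcal A))\ge{\rm co}_2(\mathcal A)$. In particular, there exists a left-compressed $t$-intersecting family $\mathcal B\subseteq\binom{[n]}{k}$ such that ${\rm co}_2(\mathcal B)\ge{\rm co}_2(\mathcal A)$.
   Context: A family is $t$-intersecting if any two members share at least $t$ elements. $d(E)=|\{F\in\mathcal F:E\subseteq F\}|$, ${\rm co}_2(\mathcal F)=\sum_{E\in\binom{[n]}{k-1}}d(E)^2$. Shift: for $A\in\mathcal A$, $\delta_{ij}(A)=(A\setminus\{j\})\cup\{i\}$ if $j\in A$, $i\notin A$ and $(A\setminus\{j\})\cup\{i\}\notin\mathcal A$; otherwise $\delta_{ij}(A)=A$; $\Delta_{ij}(\mathcal A)=\{\delta_{ij}(A):A\in\mathcal A\}$. A family $\mathcal B$ is left-compressed if $\Delta_{ij}(\mathcal B)=\mathcal B$ for all $1\le i<j\le n$. *)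

From mathcomp Require Import all_boot.
Set Implicit Arguments. Unset Strict Implicit. Unset Printing Implicit Defensive.

(* Ground set [n] is modelled by 'I_n (elements 0..n-1); order on 'I_n is the
   order of the natural numbers, so "i < j" has the same meaning. *)

Definition uniform (n k : nat) (A : {set {set 'I_n}}) : Prop :=
  forall F, F \in A -> #|F| = k.

Definition t_intersecting (n t : nat) (A : {set {set 'I_n}}) : Prop :=
  forall F G, F \in A -> G \in A -> t <= #|F :&: G|.

Definition deg (n : nat) (A : {set {set 'I_n}}) (E : {set 'I_n}) : nat :=
  #|[set F in A | E \subset F]|.

Definition co2 (n k : nat) (A : {set {set 'I_n}}) : nat :=
  \sum_(E : {set 'I_n} | #|E| == k.-1) deg A E ^ 2.

Definition delta (n : nat) (i j : 'I_n) (A : {set {set 'I_n}}) (F : {set 'I_n})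
  : {set 'I_n} :=
  if [&& j \in F, i \notin F & (i |: (F :\ j)) \notin A]
  then i |: (F :\ j) else F.

Definition Delta (n : nat) (i j : 'I_n) (A : {set {set 'I_n}}) : {set {set 'I_n}} :=
  [set delta i j A F | F in A].

Definition left_compressed (n : nat) (B : {set {set 'I_n}}) : Prop :=
  forall i j : 'I_n, i < j -> Delta i j B = B.

From mathcomp Require Import all_boot perm zify.
Set Implicit Arguments. Unset Strict Implicit. Unset Printing Implicit Defensive.

(* Let F' denote the image of a set F under the transposition (i j).  For a
   (k-1)-set E with i in E and j not in E, the shift preserves d(E) + d(E')
   and raises d(E) to at least max(d(E), d(E')); as x^2 + y^2 grows when a
   fixed sum is made more unbalanced, d(E)^2 + d(E')^2 does not decrease.
   The sets E containing both or neither of i, j satisfy E' = E and keep their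
   degree.  For the second claim, a shift with i < j that changes the family
   strictly decreases the total sum of the elements of its members, so
   repeated shifting ends at a left-compressed family; shifting preserves
   uniformity and t-intersection. *)

Lemma sqr_majorized (p q a b : nat) : a + b = p + q -> a <= p -> b <= p ->
  a ^ 2 + b ^ 2 <= p ^ 2 + q ^ 2.
Proof. by move=> *; nia. Qed.

Section SwapSet.

Variables (n : nat) (i j : 'I_n).

Definition swapset (F : {set 'I_n}) : {set 'I_n} := tperm i j @^-1: F.

Lemma in_swapset x (F : {set 'I_n}) : (x \in swapset F) = (tperm i j x \in F).
Proof. by rewrite inE. Qed.

Lemma swapsetK : involutive swapset.
Proof. by move=> F; apply/setP => x; rewrite !inE tpermK. Qed.

Lemma swapset_inj : injective swapset.
Proof. exact: inv_inj swapsetK. Qed.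

Lemma card_swapset (F : {set 'I_n}) : #|swapset F| = #|F|.
Proof. exact/card_preimset/perm_inj. Qed.

Lemma swapsetI (F G : {set 'I_n}) : swapset (F :&: G) = swapset F :&: swapset G.
Proof. exact: preimsetI. Qed.

Lemma sub_swapset (E F : {set 'I_n}) : (E \subset swapset F) = (swapset E \subset F).
Proof.
apply/subsetP/subsetP => sub x; first by rewrite inE => /sub; rewrite inE tpermK.
by move=> xE; rewrite inE; apply: sub; rewrite inE tpermK.
Qed.

Lemma swapset_id (F : {set 'I_n}) : (i \in F) = (j \in F) -> swapset F = F.
Proof.
move=> ijF; apply/setP => x; rewrite inE.
case: (eqVneq x i) => [->|xi]; first by rewrite tpermL ijF.
case: (eqVneq x j) => [->|xj]; first by rewrite tpermR ijF.
by rewrite tpermD // eq_sym.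
Qed.

Lemma swapset_shift (F : {set 'I_n}) : j \in F -> i \notin F -> i |: (F :\ j) = swapset F.
Proof.
move=> jF iF; apply/setP => x; rewrite !inE.
case: (eqVneq x i) => [->|xi]; first by rewrite tpermL jF.
case: (eqVneq x j) => [->|xj] /=; first by rewrite tpermR (negbTE iF).
by rewrite tpermD // eq_sym.
Qed.

End SwapSet.

Section Shift.

Variables (n : nat) (i j : 'I_n) (X : {set {set 'I_n}}).

Local Notation sw := (swapset i j).

Lemma deltaE (F : {set 'I_n}) :
  delta i j X F = if [&& j \in F, i \notin F & sw F \notin X] then sw F else F.
Proof.
rewrite /delta; case jF: (j \in F) => //; case iF: (i \in F) => //=.
by rewrite swapset_shift ?iF.
Qed.

Lemma mem_Delta (F : {set 'I_n}) :
  (F \in Delta i j X) =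
    if (i \in F) == (j \in F) then F \in X
    else if i \in F then (F \in X) || (sw F \in X)
    else (F \in X) && (sw F \in X).
Proof.
have swF_i : (i \in sw F) = (j \in F) by rewrite in_swapset tpermL.
have swF_j : (j \in sw F) = (i \in F) by rewrite in_swapset tpermR.
apply/imsetP/idP => [[G GX ->]|].
  rewrite deltaE; case jG: (j \in G); case iG: (i \in G) => /=; rewrite ?GX ?jG ?iG //=.
  case sGX: (sw G \in X) => /=;
    by rewrite ?in_swapset ?tpermL ?tpermR ?iG ?jG ?swapsetK ?GX ?sGX.
case iF: (i \in F); case jF: (j \in F) => /=;
  try by move=> FX; exists F => //; rewrite deltaE iF jF.
- case: (boolP (F \in X)) => [FX _|FX sFX]; first by exists F => //; rewrite deltaE jF.
  by exists (sw F) => //; rewrite deltaE swF_i swF_j iF jF swapsetK FX.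
- by case/andP=> FX sFX; exists F => //; rewrite deltaE jF iF sFX.
Qed.

Lemma mem_Delta_pair (F : {set 'I_n}) :
  (F \in Delta i j X) + (sw F \in Delta i j X) = (F \in X) + (sw F \in X).
Proof.
rewrite !mem_Delta !in_swapset tpermL tpermR swapsetK.
by case: (i \in F); case: (j \in F); case: (F \in X); case: (sw F \in X).
Qed.

Lemma mem_Delta_ge (F : {set 'I_n}) : i \in F ->
  ((F \in X) <= (F \in Delta i j X)) && ((sw F \in X) <= (F \in Delta i j X)).
Proof.
move=> iF; rewrite mem_Delta iF; case jF: (j \in F) => /=.
  by rewrite swapset_id ?iF ?jF // leqnn.
by case: (F \in X); case: (sw F \in X).
Qed.

Lemma uniform_Delta k : uniform k X -> uniform k (Delta i j X).
Proof.
by move=> uX _ /imsetP[F FX ->]; rewrite deltaE; case: ifP; rewrite ?card_swapset uX.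
Qed.

Lemma delta_inj : {in X &, injective (delta i j X)}.
Proof.
move=> F G FX GX; rewrite !deltaE.
case: ifP => [/and3P[_ _ sFX]|_]; case: ifP => [/and3P[_ _ sGX]|_] //.
- exact: swapset_inj.
- by move=> eFG; rewrite eFG GX in sFX.
- by move=> eFG; rewrite -eFG FX in sGX.
Qed.

Section Intersecting.

Variable t : nat.
Hypothesis tX : t_intersecting t X.

Lemma t_intersecting_shifted (F G : {set 'I_n}) :
  F \in X -> G \in X -> j \in F -> i \notin F ->
  ~~ [&& j \in G, i \notin G & sw G \notin X] -> t <= #|sw F :&: G|.
Proof.
move=> FX GX jF iF G_fixed; case jG: (j \in G).
  have sGX : sw G \in X.
    case iG: (i \in G); first by rewrite swapset_id ?iG ?jG.
    by move: G_fixed; rewrite jG iG negbK.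
  by rewrite -(card_swapset i j) swapsetI !swapsetK; apply: tX.
apply: leq_trans (tX FX GX) (subset_leq_card _); apply/subsetP => x.
rewrite !inE => /andP[xF xG]; rewrite xG andbT tpermD //.
- by apply: contraNneq iF => ->.
- by apply: contraFneq jG => ->.
Qed.

Lemma t_intersecting_Delta : t_intersecting t (Delta i j X).
Proof.
move=> _ _ /imsetP[F FX ->] /imsetP[G GX ->]; rewrite !deltaE.
case: ifP => F_shifted; case: ifP => G_shifted.
- by rewrite -swapsetI card_swapset; apply: tX.
- by case/and3P: F_shifted => jF iF _; apply: t_intersecting_shifted; rewrite ?G_shifted.
- case/and3P: G_shifted => jG iG _; rewrite setIC.
  by apply: t_intersecting_shifted; rewrite ?F_shifted.
- exact: tX.
Qed.

End Intersecting.

End Shift.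

Section Degree.

Variables (n : nat) (i j : 'I_n).

Local Notation sw := (swapset i j).

Lemma degE (X : {set {set 'I_n}}) (E : {set 'I_n}) :
  deg X E = \sum_(F : {set 'I_n}) ((F \in X) && (E \subset F)).
Proof.
rewrite /deg -sum1_card big_mkcond /=; apply: eq_bigr => F _.
by rewrite inE; case: (_ && _).
Qed.

Lemma deg_swapsetE (X : {set {set 'I_n}}) (E : {set 'I_n}) :
  deg X (sw E) = \sum_(F : {set 'I_n}) ((sw F \in X) && (E \subset F)).
Proof.
rewrite degE (reindex_inj (@swapset_inj n i j)).
by apply: eq_bigr => F _; rewrite sub_swapset !swapsetK.
Qed.

Lemma deg_Delta_pair (X : {set {set 'I_n}}) (E : {set 'I_n}) :
  deg (Delta i j X) E + deg (Delta i j X) (sw E) = deg X E + deg X (sw E).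
Proof.
rewrite degE deg_swapsetE degE deg_swapsetE -!big_split /=.
apply: eq_bigr => F _; have := mem_Delta_pair i j X F.
by case: (E \subset F); rewrite ?andbT ?andbF.
Qed.

Lemma deg_Delta_ge (X : {set {set 'I_n}}) (E : {set 'I_n}) : i \in E ->
  maxn (deg X E) (deg X (sw E)) <= deg (Delta i j X) E.
Proof.
move=> iE; rewrite geq_max degE deg_swapsetE degE.
apply/andP; split; apply: leq_sum => F _; case EF: (E \subset F); rewrite ?andbT ?andbF //;
  by have /andP[] := mem_Delta_ge j X (subsetP EF _ iE).
Qed.

Lemma deg_Delta_sqr (X : {set {set 'I_n}}) (E : {set 'I_n}) :
  deg X E ^ 2 + deg X (sw E) ^ 2 <= deg (Delta i j X) E ^ 2 + deg (Delta i j X) (sw E) ^ 2.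
Proof.
have unbalance (E' : {set 'I_n}) : i \in E' -> deg X E' ^ 2 + deg X (sw E') ^ 2
    <= deg (Delta i j X) E' ^ 2 + deg (Delta i j X) (sw E') ^ 2.
  move=> iE'; have := deg_Delta_ge X iE'; rewrite geq_max => /andP[].
  exact: sqr_majorized (esym (deg_Delta_pair X E')).
case iE: (i \in E); first exact: unbalance.
case jE: (j \in E).
  have := unbalance (sw E); rewrite in_swapset tpermL jE swapsetK => /(_ isT).
  by rewrite addnC [X in _ <= X]addnC.
have swE : sw E = E by apply: swapset_id; rewrite iE jE.
have := deg_Delta_pair X E; rewrite swE => pairE.
by have -> : deg (Delta i j X) E = deg X E by lia.
Qed.

Lemma co2_swapset k (X : {set {set 'I_n}}) :
  co2 k X = \sum_(E : {set 'I_n} | #|E| == k.-1) deg X (sw E) ^ 2.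
Proof.
rewrite /co2 (reindex_inj (@swapset_inj n i j)) /=.
by apply: eq_bigl => E; rewrite card_swapset.
Qed.

Lemma co2_Delta k (X : {set {set 'I_n}}) : co2 k X <= co2 k (Delta i j X).
Proof.
(* Count every E twice, the second time through its swap E'. *)
rewrite -(@leq_pmul2l 2) // !mul2n -!addnn {2}co2_swapset [X in _ <= _ + X]co2_swapset.
by rewrite /co2 -!big_split; apply: leq_sum => E _; apply: deg_Delta_sqr.
Qed.

End Degree.

Section Termination.

Variable n : nat.

Definition weight (F : {set 'I_n}) : nat := \sum_(x in F) x.

Definition fam_weight (X : {set {set 'I_n}}) : nat := \sum_(F in X) weight F.

Lemma weight_delta (i j : 'I_n) (X : {set {set 'I_n}}) (F : {set 'I_n}) : i < j ->
  weight (delta i j X F) + (delta i j X F != F) <= weight F.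
Proof.
move=> lt_ij; rewrite /delta; case: ifP => [/and3P[jF iF _]|_]; last by rewrite eqxx addn0.
have -> : i |: (F :\ j) != F by apply: contraNneq iF => <-; rewrite setU11.
rewrite /weight big_setU1 /=; last by rewrite !inE negb_and iF orbT.
by rewrite [X in _ <= X](big_setD1 j) //= addn1 ltn_add2r.
Qed.

Lemma Delta_id (i j : 'I_n) (X : {set {set 'I_n}}) :
  {in X, forall F, delta i j X F = F} -> Delta i j X = X.
Proof. by move=> fixX; rewrite /Delta (eq_in_imset fixX) imset_id. Qed.

Lemma fam_weight_Delta (i j : 'I_n) (X : {set {set 'I_n}}) : i < j ->
  Delta i j X != X -> fam_weight (Delta i j X) < fam_weight X.
Proof.
move=> lt_ij shifts.
have [F FX moved] : exists2 F, F \in X & delta i j X F != F.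
  apply/exists_inP; apply: contraNT shifts => /exists_inPn fixX.
  by apply/eqP/Delta_id => F /fixX /negPn /eqP.
rewrite /fam_weight /Delta big_imset /=; last exact: delta_inj.
rewrite (bigD1 F) //= [X in _ < X](bigD1 F) //= -addSn.
apply: leq_add; first by have := weight_delta X F lt_ij; rewrite moved addn1.
by apply: leq_sum => G _; apply: leq_trans (leq_addr _ _) (weight_delta X G lt_ij).
Qed.

Lemma exists_left_compressed (P : {set {set 'I_n}} -> Prop) (A : {set {set 'I_n}}) :
  (forall (i j : 'I_n) X, i < j -> P X -> P (Delta i j X)) -> P A ->
  exists2 B, P B & left_compressed B.
Proof.
move=> P_Delta; have [m] := ubnP (fam_weight A); elim: m A => // m IHm X lt_wX PX.
have [[i j] /andP[/= lt_ij shifts]|] :=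
  pickP [pred ij : 'I_n * 'I_n | (ij.1 < ij.2) && (Delta ij.1 ij.2 X != X)].
  apply: (IHm (Delta i j X)); last exact: P_Delta.
  exact: leq_trans (fam_weight_Delta lt_ij shifts) lt_wX.
move=> fixed; exists X => // i j lt_ij; apply/eqP.
by have := fixed (i, j); rewrite /= lt_ij /= => /negbFE.
Qed.

End Termination.

Theorem corollary2p3 (n k t : nat) (A : {set {set 'I_n}}) :
  1 <= t -> uniform k A -> t_intersecting t A ->
  (forall i j : 'I_n, i < j -> co2 k (Delta i j A) >= co2 k A) /\
  (exists B : {set {set 'I_n}},
      [/\ uniform k B, t_intersecting t B, left_compressed B &
          co2 k B >= co2 k A]).
Proof.
move=> _ uA tA; split=> [i j _|]; first exact: co2_Delta.
pose P (X : {set {set 'I_n}}) := [/\ uniform k X, t_intersecting t X & co2 k A <= co2 k X].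
have [B [uB tB cB] lB] : exists2 B, P B & left_compressed B.
  apply: (@exists_left_compressed n P A) => [i j X _ [uX tX cX]|]; last by split.
  split; [exact: uniform_Delta | exact: t_intersecting_Delta |].
  exact: leq_trans cX (co2_Delta _ _ _ _).
by exists B.
Qed.
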